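(* Let $n\ge 3$ be an odd integer. Then $$\sum_{k=1}^{\frac{n-1}{2}} (-1)^{k+1}\frac{\sin\frac{2k\pi}{n}}{\sin\frac{k\pi}{n}} = 1$$ and $$\sum_{k=1}^{\frac{n-1}{2}} (-1)^{k+1}\frac{\sin\frac{k\pi}{n}}{\sin\frac{2k\pi}{n}} = (-1)^{\frac{n+1}{2}}\left(\frac{n-1}{4}\right) + \frac{\chi_o\left(\frac{n-1}{2}\right)}{2},$$ where $\chi_o(m)=1$ if $m$ is odd and $\chi_o(m)=0$ if $m$ is even. *)

From Stdlib Require Import Reals Lra Lia Arith.
Open Scope R_scope.

Fixpoint sum1 (m : nat) (f : nat -> R) : R :=
  match m with
  | O => 0
  | S m' => sum1 m' f + f (S m')
  end.

Definition chi_o (m : nat) : R := if Nat.odd m then 1 else 0.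

(* With n = 2p+1 and x_k = k pi/n, the summands are 2 cos x_k and 1/(2 cos x_k).
   Both sums are then evaluated with the telescoping identity
   2 cos(a/2) sum_{k<=m} (-1)^(k+1) cos(k a) = cos(a/2) + (-1)^(m+1) cos((2m+1)a/2),
   which gives 1/2 whenever cos((2m+1)a/2) = 0.  For the second sum, 1/cos x_k
   is first expanded as the alternating sum of cos((2j-1) x_k) over 1 <= j <= n
   (again telescoping, since cos(2n x_k) = 1); after exchanging the two sums,
   every inner sum equals 1/2 except the one for j = p+1, where (2j-1) x_k = k pi. *)

From Stdlib Require Import Reals Arith Lra Lia.
Open Scope R_scope.

Lemma sum1_S m f : sum1 (S m) f = sum1 m f + f (S m).
Proof. reflexivity. Qed.

Lemma sum1_ext m f g :
  (forall k, (1 <= k <= m)%nat -> f k = g k) -> sum1 m f = sum1 m g.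
Proof.
  induction m as [|m IH]; intros Hfg; simpl; [reflexivity|].
  rewrite IH by (intros; apply Hfg; lia).
  rewrite Hfg by lia; reflexivity.
Qed.

Lemma sum1_ext_except m j f g :
  (1 <= j <= m)%nat -> (forall k, (1 <= k <= m)%nat -> k <> j -> f k = g k) ->
  sum1 m f = sum1 m g + (f j - g j).
Proof.
  induction m as [|m IH]; intros Hj Hfg; simpl; [lia|].
  destruct (Nat.eq_dec j (S m)) as [->|Hjm].
  - rewrite (sum1_ext m f g) by (intros; apply Hfg; lia); ring.
  - rewrite IH by first [lia | intros; apply Hfg; lia].
    rewrite (Hfg (S m)) by lia; ring.
Qed.

Lemma sum1_scal m c f : sum1 m (fun k => c * f k) = c * sum1 m f.
Proof. induction m as [|m IH]; simpl; [|rewrite IH]; ring. Qed.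

Lemma sum1_const m c : sum1 m (fun _ => c) = INR m * c.
Proof. induction m as [|m IH]; [simpl|rewrite S_INR; simpl; rewrite IH]; ring. Qed.

Lemma sum1_comm m N F :
  sum1 m (fun k => sum1 N (fun j => F k j)) = sum1 N (fun j => sum1 m (fun k => F k j)).
Proof.
  induction m as [|m IH]; simpl.
  - induction N as [|N IHN]; simpl; [|rewrite <- IHN]; ring.
  - rewrite IH; clear IH.
    induction N as [|N IHN]; simpl; [|rewrite <- IHN]; ring.
Qed.

Lemma sum1_alt_odd q : sum1 (2 * q + 1) (fun k => (-1) ^ (k + 1)) = 1.
Proof.
  induction q as [|q IH]; [simpl; ring|].
  replace (2 * S q + 1)%nat with (S (S (2 * q + 1))) by lia.
  rewrite (sum1_S (S _)), sum1_S, IH, !Nat.add_1_r; simpl pow; ring.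
Qed.

Lemma chi_o_pow m : chi_o m = (1 - (-1) ^ m) / 2.
Proof.
  unfold chi_o; destruct (Nat.Even_or_Odd m) as [[q ->]|[q ->]].
  - rewrite Nat.odd_even, pow_1_even; field.
  - rewrite Nat.odd_odd, Nat.add_1_r, pow_1_odd; field.
Qed.

Lemma cos_INR_mult_PI k : cos (INR k * PI) = (-1) ^ k.
Proof.
  induction k as [|k IH]; [rewrite Rmult_0_l, cos_0; reflexivity|].
  rewrite S_INR, Rmult_plus_distr_r, Rmult_1_l, neg_cos, IH; simpl; ring.
Qed.

Lemma cos_odd_mult_PI2 j : cos ((2 * INR (S j) - 1) * PI / 2) = 0.
Proof.
  apply cos_eq_0_1; exists (Z.of_nat j).
  rewrite <- INR_IZR_INZ, S_INR; field.
Qed.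

Lemma PI_frac_pos u v : 0 < u -> 0 < v -> 0 < u * PI / v.
Proof. pose proof PI_RGT_0; intros; apply Rdiv_lt_0_compat; nra. Qed.

Lemma PI_frac_lt u v c : 0 < v -> u < c * v -> u * PI / v < c * PI.
Proof.
  pose proof PI_RGT_0; intros Hv Hu; apply (Rmult_lt_reg_r v); [lra|].
  replace (u * PI / v * v) with (u * PI) by (field; lra); nra.
Qed.

Lemma PI_frac_le u v c : 0 < v -> u <= c * v -> u * PI / v <= c * PI.
Proof.
  pose proof PI_RGT_0; intros Hv Hu; apply (Rmult_le_reg_r v); [lra|].
  replace (u * PI / v * v) with (u * PI) by (field; lra); nra.
Qed.

Lemma alt_cos_sum a m :
  2 * cos (a / 2) * sum1 m (fun k => (-1) ^ (k + 1) * cos (INR k * a))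
  = cos (a / 2) + (-1) ^ (m + 1) * cos ((2 * INR m + 1) * a / 2).
Proof.
  induction m as [|m IH].
  - simpl; replace ((2 * 0 + 1) * a / 2) with (a / 2) by field; ring.
  - rewrite sum1_S, Rmult_plus_distr_l, IH, !Nat.add_1_r, S_INR; simpl pow.
    replace ((2 * (INR m + 1) + 1) * a / 2) with ((INR m + 1) * a + a / 2) by field.
    replace ((2 * INR m + 1) * a / 2) with ((INR m + 1) * a - a / 2) by field.
    rewrite cos_plus, cos_minus; ring.
Qed.

Lemma alt_cos_sum_eq_half a m :
  cos (a / 2) <> 0 -> cos ((2 * INR m + 1) * a / 2) = 0 ->
  sum1 m (fun k => (-1) ^ (k + 1) * cos (INR k * a)) = 1 / 2.
Proof.
  intros Ha Hm; apply (Rmult_eq_reg_l (2 * cos (a / 2))); [|lra].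
  rewrite alt_cos_sum, Hm; field; assumption.
Qed.

Lemma alt_cos_odd_sum x N :
  2 * cos x * sum1 N (fun j => (-1) ^ (j + 1) * cos ((2 * INR j - 1) * x))
  = 1 + (-1) ^ (N + 1) * cos (2 * INR N * x).
Proof.
  induction N as [|N IH].
  - simpl; replace (2 * 0 * x) with 0 by ring; rewrite cos_0; ring.
  - rewrite sum1_S, Rmult_plus_distr_l, IH, !Nat.add_1_r, S_INR; simpl pow.
    replace (2 * (INR N + 1) * x) with ((2 * INR N + 1) * x + x) by ring.
    replace (2 * INR N * x) with ((2 * INR N + 1) * x - x) by ring.
    replace ((2 * (INR N + 1) - 1) * x) with ((2 * INR N + 1) * x) by ring.
    rewrite cos_plus, cos_minus; ring.
Qed.

Lemma inv_cos_alt_sum x N :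
  Nat.Odd N -> cos x <> 0 -> cos (2 * INR N * x) = 1 ->
  / cos x = sum1 N (fun j => (-1) ^ (j + 1) * cos ((2 * INR j - 1) * x)).
Proof.
  intros [q ->] Hx HN; apply (Rmult_eq_reg_l (2 * cos x)); [|lra].
  rewrite alt_cos_odd_sum, HN.
  replace (2 * q + 1 + 1)%nat with (2 * (q + 1))%nat by lia.
  rewrite pow_1_even; field; assumption.
Qed.

Section OddDenominator.

Variable p : nat.

Local Notation n := (2 * p + 1)%nat.

Lemma INR_odd : INR n = 2 * INR p + 1.
Proof. rewrite plus_INR, mult_INR; simpl; ring. Qed.

Lemma INR_odd_pos : 0 < INR n.
Proof. rewrite INR_odd; pose proof (pos_INR p); lra. Qed.

Lemma cos_sin_pos_below_PI2 k :
  (1 <= k <= p)%nat -> 0 < cos (INR k * PI / INR n) /\ 0 < sin (INR k * PI / INR n).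
Proof.
  intros Hk.
  assert (H1k : 1 <= INR k) by (apply (le_INR 1); lia).
  assert (Hkp : INR k <= INR p) by (apply le_INR; lia).
  pose proof INR_odd_pos as Hn.
  assert (Hpos : 0 < INR k * PI / INR n) by (apply PI_frac_pos; lra).
  assert (Hlt : INR k * PI / INR n < 1 / 2 * PI)
    by (apply PI_frac_lt; rewrite ?INR_odd; lra).
  split; [apply cos_gt_0 | apply sin_gt_0]; lra.
Qed.

Lemma alt_sum_sin_double_ratio :
  (1 <= p)%nat ->
  sum1 p (fun k => (-1) ^ (k + 1) *
      (sin (2 * INR k * PI / INR n) / sin (INR k * PI / INR n))) = 1.
Proof.
  intros Hp.
  pose proof INR_odd_pos as Hn.
  rewrite (sum1_ext _ _ (fun k => 2 * ((-1) ^ (k + 1) * cos (INR k * (PI / INR n))))).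
  2: { intros k Hk; destruct (cos_sin_pos_below_PI2 k Hk) as [_ Hsin].
       replace (2 * INR k * PI / INR n) with (2 * (INR k * PI / INR n)) by (field; lra).
       replace (INR k * (PI / INR n)) with (INR k * PI / INR n) by (field; lra).
       rewrite sin_2a; field; lra. }
  rewrite sum1_scal, alt_cos_sum_eq_half; [field| |].
  - assert (1 <= INR p) by (apply (le_INR 1); exact Hp).
    assert (1 < INR n) by (rewrite INR_odd; lra).
    replace (PI / INR n / 2) with (1 * PI / (2 * INR n)) by (field; lra).
    assert (0 < 1 * PI / (2 * INR n)) by (apply PI_frac_pos; lra).
    assert (1 * PI / (2 * INR n) < 1 / 2 * PI) by (apply PI_frac_lt; lra).
    apply Rgt_not_eq, cos_gt_0; lra.
  - rewrite <- INR_odd; replace (INR n * (PI / INR n) / 2) with (PI / 2) by (field; lra).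
    apply cos_PI2.
Qed.

Lemma inner_alt_cos_sum_generic j :
  (1 <= j <= n)%nat -> j <> S p ->
  sum1 p (fun k => (-1) ^ (k + 1) * cos (INR k * ((2 * INR j - 1) * PI / INR n))) = 1 / 2.
Proof.
  intros Hj Hjp.
  pose proof INR_odd_pos as Hn.
  assert (H1j : 1 <= INR j) by (apply (le_INR 1); lia).
  assert (Hjn : INR j <= INR n) by (apply le_INR; lia).
  apply alt_cos_sum_eq_half.
  - replace ((2 * INR j - 1) * PI / INR n / 2) with ((INR j - 1 / 2) * PI / INR n)
      by (field; lra).
    intros Hcos; apply Hjp, INR_eq.
    assert (Hangle : (INR j - 1 / 2) * PI / INR n = PI / 2).
    { rewrite <- cos_PI2 in Hcos; apply cos_inj; [split| |exact Hcos].
      - apply Rlt_le, PI_frac_pos; lra.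
      - rewrite <- (Rmult_1_l PI) at 2; apply PI_frac_le; lra.
      - pose proof PI_RGT_0; lra. }
    assert (Hj2 : INR j - 1 / 2 = INR n / 2).
    { pose proof PI_RGT_0; apply (Rmult_eq_reg_r PI); [|lra].
      replace ((INR j - 1 / 2) * PI) with (PI / 2 * INR n) by (rewrite <- Hangle; field; lra).
      lra. }
    rewrite INR_odd in Hj2; rewrite S_INR; lra.
  - destruct j as [|j]; [lia|].
    rewrite <- INR_odd.
    replace (INR n * ((2 * INR (S j) - 1) * PI / INR n) / 2)
      with ((2 * INR (S j) - 1) * PI / 2) by (field; lra).
    apply cos_odd_mult_PI2.
Qed.

Lemma inner_alt_cos_sum_middle :
  sum1 p (fun k => (-1) ^ (k + 1) * cos (INR k * ((2 * INR (S p) - 1) * PI / INR n)))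
  = - INR p.
Proof.
  pose proof (pos_INR p).
  rewrite (sum1_ext _ _ (fun _ => -1)), sum1_const; [ring|].
  intros k _.
  replace ((2 * INR (S p) - 1) * PI / INR n) with PI by (rewrite INR_odd, S_INR; field; lra).
  rewrite cos_INR_mult_PI, <- pow_add.
  replace (k + 1 + k)%nat with (S (2 * k)) by lia.
  apply pow_1_odd.
Qed.

Lemma sin_half_ratio_expansion k :
  (1 <= k <= p)%nat ->
  sin (INR k * PI / INR n) / sin (2 * INR k * PI / INR n)
  = 1 / 2 * sum1 n (fun j => (-1) ^ (j + 1) * cos (INR k * ((2 * INR j - 1) * PI / INR n))).
Proof.
  intros Hk; destruct (cos_sin_pos_below_PI2 k Hk) as [Hcos Hsin].
  pose proof INR_odd_pos as Hn.
  set (x := INR k * PI / INR n) in *.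
  replace (2 * INR k * PI / INR n) with (2 * x) by (unfold x; field; lra).
  replace (sin x / sin (2 * x)) with (1 / 2 * / cos x) by (rewrite sin_2a; field; lra).
  rewrite (inv_cos_alt_sum x n).
  - f_equal; apply sum1_ext; intros j _.
    f_equal; f_equal; unfold x; field; lra.
  - exists p; reflexivity.
  - lra.
  - replace (2 * INR n * x) with (0 + 2 * INR k * PI) by (unfold x; field; lra).
    rewrite cos_period; apply cos_0.
Qed.

Lemma alt_sum_sin_half_ratio :
  sum1 p (fun k => (-1) ^ (k + 1) *
      (sin (INR k * PI / INR n) / sin (2 * INR k * PI / INR n)))
  = (-1) ^ (p + 1) * ((INR n - 1) / 4) + chi_o p / 2.
Proof.
  set (c j k := cos (INR k * ((2 * INR j - 1) * PI / INR n))).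
  rewrite (sum1_ext _ _ (fun k => sum1 n (fun j => 1 / 2 * (-1) ^ (j + 1) * ((-1) ^ (k + 1) * c j k)))).
  2: { intros k Hk; rewrite sin_half_ratio_expansion by exact Hk.
       rewrite <- !sum1_scal; apply sum1_ext; intros; unfold c; ring. }
  rewrite sum1_comm.
  rewrite (sum1_ext _ _ (fun j => 1 / 2 * (-1) ^ (j + 1) * sum1 p (fun k => (-1) ^ (k + 1) * c j k)))
    by (intros; apply sum1_scal).
  rewrite (sum1_ext_except n (S p) _ (fun j => 1 / 4 * (-1) ^ (j + 1))).
  - unfold c; rewrite inner_alt_cos_sum_middle, sum1_scal, sum1_alt_odd, chi_o_pow, INR_odd.
    rewrite !Nat.add_1_r; simpl pow; field.
  - lia.
  - intros j Hj Hjp; unfold c; rewrite inner_alt_cos_sum_generic by assumption; field.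
Qed.

End OddDenominator.

Theorem theorem1 (n : nat) (Hn : (3 <= n)%nat) (Hodd : Nat.Odd n) :
  sum1 ((n - 1) / 2) (fun k => (-1) ^ (k + 1) *
      (sin (2 * INR k * PI / INR n) / sin (INR k * PI / INR n))) = 1
  /\
  sum1 ((n - 1) / 2) (fun k => (-1) ^ (k + 1) *
      (sin (INR k * PI / INR n) / sin (2 * INR k * PI / INR n)))
  = (-1) ^ ((n + 1) / 2) * ((INR n - 1) / 4) + chi_o ((n - 1) / 2) / 2.
Proof.
  destruct Hodd as [p ->].
  replace ((2 * p + 1 - 1) / 2)%nat with p
    by (replace (2 * p + 1 - 1)%nat with (p * 2)%nat by lia; rewrite Nat.div_mul; lia).
  replace ((2 * p + 1 + 1) / 2)%nat with (p + 1)%nat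
    by (replace (2 * p + 1 + 1)%nat with ((p + 1) * 2)%nat by lia; rewrite Nat.div_mul; lia).
  split.
  - apply alt_sum_sin_double_ratio; lia.
  - apply alt_sum_sin_half_ratio.
Qed.
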